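(* Let $\sigma:[0,\infty)\to[0,\infty)$ be nondecreasing with $\lim_{t\to\infty}\sigma(t)=\infty$. If $\gamma(\sigma)>0$, then $\gamma(\sigma)+1=\gamma((\sigma^{\iota})_{\star})$.
   Context: $\sigma^{\iota}(t):=\sigma(1/t)$ for $t>0$. For $h:(0,\infty)\to[0,\infty)$ nonincreasing with $\lim_{t\to0}h(t)=\infty$, $h_{\star}(t):=\inf_{s>0}\{h(s)+ts\}$ for $t\ge0$. For a nondecreasing function $\sigma$ tending to $\infty$ and $\gamma>0$, $(P_{\sigma,\gamma})$ holds if there is $K>1$ with $\limsup_{t\to\infty}\sigma(K^{\gamma}t)/\sigma(t)<K$; $\gamma(\sigma):=\sup\{\gamma>0:(P_{\sigma,\gamma})\text{ holds}\}$, and $:=0$ if none holds. *)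

From HB Require Import structures.
From mathcomp Require Import all_boot all_order all_algebra.
From mathcomp Require Import all_classical all_reals all_analysis.
Set Implicit Arguments. Unset Strict Implicit. Unset Printing Implicit Defensive.
Import Order.TTheory GRing.Theory Num.Theory.
Import numFieldNormedType.Exports.
Local Open Scope classical_set_scope.
Local Open Scope ring_scope.

Section defs.
Variable R : realType.

Definition iota_fn (sigma : R -> R) : R -> R := fun t => sigma (1 / t).

Definition lstar (h : R -> R) : R -> R :=
  fun t => inf [set h s + t * s | s in `]0, +oo[].

Definition limsup_pinfty (g : R -> R) : \bar R :=
  limf_esup (fun t => (g t)%:E) (+oo : set_system R).

Definition P_prop (sigma : R -> R) (gam : R) : Prop :=
  exists K : R, 1 < K /\
    (limsup_pinfty (fun t => (sigma (K `^ gam * t) / sigma t)%R) < K%:E)%E.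

Definition gamma_idx (sigma : R -> R) : \bar R :=
  if `[< exists gam : R, 0 < gam /\ P_prop sigma gam >] then
    ereal_sup [set gam%:E | gam in [set gam : R | 0 < gam /\ P_prop sigma gam]]
  else 0%E.
End defs.

From HB Require Import structures.
From mathcomp Require Import all_boot all_order all_algebra.
From mathcomp Require Import all_classical all_reals all_analysis.
From mathcomp Require Import ring lra.
Set Implicit Arguments.
Unset Strict Implicit.
Unset Printing Implicit Defensive.
Import Order.TTheory GRing.Theory Num.Theory.
Import numFieldNormedType.Exports.
Local Open Scope classical_set_scope.
Local Open Scope ring_scope.

(* Write h for (sigma^iota)_star, so that h t = inf_(u > 0) (sigma u + t / u) and
   min (sigma u) (t / u) <= h t <= sigma u + t / u for every u > 0.  Through these bounds an
   eventual dilation inequality sigma (a u) <= c sigma u yields h (a lam t) <= max c lam * h t,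
   and conversely h (lam L s) <= C h s yields sigma (lam x) <= 2 C sigma x when 2 C < L; the
   extra factor lam, resp. L, is what shifts the exponent by 1.  The constants lost on the way
   are absorbed by replacing K and c by K ^ n and c ^ n with (K / c) ^ n large.  Hence
   (P_{sigma,gam}) implies (P_{h,gam+1}) for gam > 0, (P_{h,del}) implies (P_{sigma,del-1})
   for del > 1, and taking suprema gives gamma(h) = gamma(sigma) + 1. *)

Section limsup_pinfty.
Variable R : realType.
Implicit Types (g : R -> R) (q : R).

Lemma limsup_pinfty_le g q : (\forall t \near +oo, g t <= q) ->
  (limsup_pinfty g <= q%:E)%E.
Proof.
move=> gq; apply: le_trans (ereal_inf_lbound _) _; first by exists [set t | g t <= q].
by apply: ge_ereal_sup => _ [t + <-]; rewrite lee_fin.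
Qed.

Lemma limsup_pinfty_lt g (K : R) : (limsup_pinfty g < K%:E)%E ->
  exists2 c, c < K & \forall t \near +oo, g t <= c.
Proof.
rewrite /limsup_pinfty /limf_esup => /ereal_inf_lt [_ [V Vpinfty <-]] supK.
have [c cK supc] : exists2 c, c < K &
    (ereal_sup ((fun t => (g t)%:E) @` V) <= c%:E)%E.
  move: supK; case: ereal_sup => [r| |] // supK; first by exists r; rewrite // -lte_fin.
  by exists (K - 1); rewrite ?leNye //; lra.
exists c => //; apply: filterS Vpinfty => t Vt.
by rewrite -lee_fin (le_trans _ supc) //; apply: ereal_sup_ubound; exists t.
Qed.

End limsup_pinfty.

Lemma exists_mul_expr_lt (R : realType) (B c K : R) : 0 < c -> c < K ->
  exists n, B * c ^+ n < K ^+ n.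
Proof.
move=> c0 cK; have K0 : 0 < K := lt_trans c0 cK.
have cK1 : `|c / K| < 1 by rewrite ger0_norm ?divr_ge0 ?ltW // ltr_pdivrMr // mul1r.
have B1 : 0 < `|B| + 1 by have := normr_ge0 B; lra.
have /cvgrPdist_lt/(_ (`|B| + 1)^-1) := cvg_expr cK1.
rewrite invr_gt0 B1 => /(_ isT) [N _ /(_ N (leqnn N))].
rewrite /= sub0r normrN ger0_norm ?exprn_ge0 ?divr_ge0 ?ltW //.
rewrite expr_div_n ltr_pdivrMr ?exprn_gt0 // ltr_pdivlMl //.
move=> lt; exists N; have := ler_norm B; have := exprn_gt0 N c0; nra.
Qed.

Lemma powR_gt1 (R : realType) (K r : R) : 1 < K -> 0 < r -> 1 < K `^ r.
Proof.
move=> K1 r0; have := @gt0_ltr_powR R r r0 1 K.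
by rewrite !nnegrE powR1 ler01 => /(_ isT (ltW (lt_trans ltr01 K1)) K1).
Qed.

Lemma powR_exprn (R : realType) (K r : R) n : 0 <= K -> (K ^+ n) `^ r = (K `^ r) ^+ n.
Proof.
move=> K0; rewrite -powR_mulrn // -powRrM mulrC powRrM powR_mulrn //.
exact: powR_ge0.
Qed.

Section dilation.
Variable R : realType.
Implicit Types (g : R -> R) (a c K q gam : R).

Lemma near_dilation_exprn g a c n : 1 <= a -> 0 <= c ->
  (\forall t \near +oo, g (a * t) <= c * g t) ->
  \forall t \near +oo, g (a ^+ n * t) <= c ^+ n * g t.
Proof.
move=> a1 c0 [T [_ HT]]; exists (Num.max T 0); split; first exact: num_real.
move=> t; rewrite gt_max => /andP[Tt t0].
elim: n => [|n IHn]; first by rewrite !expr0 !mul1r.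
rewrite !exprS -!mulrA (le_trans (HT _ _)) ?ler_wpM2l //.
by rewrite (lt_le_trans Tt) // ler_peMl ?exprn_ege1 // ltW.
Qed.

Lemma P_prop_dilation g gam : (\forall t \near +oo, 0 < g t) -> P_prop g gam ->
  exists K c, [/\ 1 < K, 1 <= c, c < K &
    \forall t \near +oo, g (K `^ gam * t) <= c * g t].
Proof.
move=> gpos [K [K1 /limsup_pinfty_lt [c cK gc]]].
exists K, (Num.max c 1); split; rewrite ?le_max ?lexx ?orbT ?gt_max ?cK //.
near=> t; rewrite -ler_pdivrMr; last by near: t.
by rewrite le_max; apply/orP; left; near: t.
Unshelve. all: by end_near.
Qed.

Lemma dilation_P_prop g gam K q : (\forall t \near +oo, 0 < g t) ->
  1 < K -> q < K -> (\forall t \near +oo, g (K `^ gam * t) <= q * g t) ->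
  P_prop g gam.
Proof.
move=> gpos K1 qK gq; exists K; split => //.
apply: le_lt_trans (_ : q%:E < K%:E)%E; last by rewrite lte_fin.
apply: limsup_pinfty_le; near=> t.
have gt0 : 0 < g t by near: t.
by rewrite ler_pdivrMr //; near: t.
Unshelve. all: by end_near.
Qed.

End dilation.

Section lstar_iota.
Variables (R : realType) (sigma : R -> R).
Hypothesis sigma_ge0 : forall t, 0 <= t -> 0 <= sigma t.
Hypothesis sigma_nd : forall s t, 0 <= s -> s <= t -> sigma s <= sigma t.
Local Notation h := (lstar (iota_fn sigma)).

Lemma lstar_iota_le t u : 0 <= t -> 0 < u -> h t <= sigma u + t / u.
Proof.
move=> t0 u0; apply: ge_inf.
  exists 0 => _ [s /= + <-]; rewrite in_itv /= andbT => s0.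
  by rewrite /iota_fn addr_ge0 ?mulr_ge0 ?(ltW s0) // sigma_ge0 // divr_ge0 // ltW.
by exists u^-1; rewrite /= ?in_itv /= ?invr_gt0 ?andbT // /iota_fn div1r invrK.
Qed.

Lemma lstar_iota_ge t m : (forall u, 0 < u -> m <= sigma u + t / u) -> m <= h t.
Proof.
move=> H; apply: lb_le_inf.
  by exists (iota_fn sigma 1 + t * 1), 1; rewrite //= in_itv /= ltr01.
move=> _ [s /= + <-]; rewrite in_itv /= andbT => s0.
by have := H s^-1; rewrite invr_gt0 /iota_fn div1r invrK; apply.
Qed.

Lemma lstar_iota_ge_min t y : 0 <= t -> 0 < y -> Num.min (sigma y) (t / y) <= h t.
Proof.
move=> t0 y0; apply: lstar_iota_ge => u u0; rewrite ge_min; apply/orP.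
have [yu|uy] := leP y u.
  left; apply: ler_wpDr; first by rewrite divr_ge0 // ltW.
  exact: sigma_nd (ltW y0) yu.
right; apply: ler_wpDl; first exact/sigma_ge0/ltW.
by apply: ler_wpM2l => //; rewrite lef_pV2 ?posrE // ltW.
Qed.

Lemma lstar_iota_dilation a c lam : 0 < a -> 0 <= c -> 0 < lam ->
  (\forall u \near +oo, sigma (a * u) <= c * sigma u) ->
  \forall t \near +oo, h (a * lam * t) <= Num.max c lam * h t.
Proof.
move=> a0 c0 lam0 [T [_ HT]]; set T1 := Num.max T 1; set M := Num.max c lam.
have T10 : 0 < T1 by rewrite lt_max ltr01 orbT.
have M0 : 0 < M by rewrite lt_max lam0 orbT.
have cM : c <= M by rewrite le_max lexx.
have lamM : lam <= M by rewrite le_max lexx orbT.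
exists (2 * T1 * sigma (2 * T1)); split; first exact: num_real.
move=> t tT; have t0 : 0 < t.
  by apply: le_lt_trans tT; rewrite !mulr_ge0 ?sigma_ge0 ?mulr_ge0 ?ltW.
rewrite [_ * h t]mulrC -ler_pdivrMr //; apply: lstar_iota_ge => u u0.
rewrite ler_pdivrMr // [_ * M]mulrC.
have h_le_at v : 0 < v -> h (a * lam * t) <= sigma (a * v) + lam * (t / v).
  move=> v0; apply: (le_trans (lstar_iota_le _ (mulr_gt0 a0 v0))).
    by rewrite !mulr_ge0 ?ltW.
  by rewrite lerD2l le_eqVlt; apply/orP; left; apply/eqP; field; rewrite !gt_eqF.
have su0 : 0 <= sigma u by exact/sigma_ge0/ltW.
have tu0 : 0 <= t / u by rewrite divr_ge0 ?ltW.
have [uT1|T1u] := leP u T1; last first.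
  apply: le_trans (h_le_at _ u0) _; rewrite mulrDr lerD ?ler_wpM2r //.
  apply: le_trans (HT _ _) _; first by apply: le_lt_trans T1u; rewrite le_max lexx.
  by rewrite ler_wpM2r.
(* For small u, test the infimum at 2 T1 instead, where t dominates 2 T1 sigma (2 T1). *)
have T1T1 : 0 < 2 * T1 by rewrite mulr_gt0.
apply: le_trans (h_le_at _ T1T1) _.
set w := t / (2 * T1).
have w0 : 0 <= w by rewrite divr_ge0 ?ltW.
have sT1w : sigma (2 * T1) <= w.
  by rewrite ler_pdivlMr // mulrC ltW.
have saT1 : sigma (a * (2 * T1)) <= c * sigma (2 * T1).
  by apply: HT; apply: le_lt_trans (_ : T1 < 2 * T1); rewrite ?le_max ?lexx //; lra.
have wtu : 2 * w <= t / u.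
  have -> : 2 * w = t / T1 by rewrite /w; field; rewrite gt_eqF.
  by apply: ler_wpM2l; [exact: ltW | rewrite lef_pV2 ?posrE].
have := ler_wpM2l c0 sT1w; have := ler_wpM2r w0 cM; have := ler_wpM2r w0 lamM.
have := ler_wpM2l (ltW M0) wtu; have := mulr_ge0 (ltW M0) su0; nra.
Qed.

Section sigma_cvgy.
Hypothesis sigma_cvgy : sigma x @[x --> +oo] --> +oo.

Let sigma_gt0 : \forall x \near +oo, 0 < sigma x.
Proof. by move/cvgryPgt : sigma_cvgy; apply. Qed.

Lemma lstar_iota_gt0 : \forall t \near +oo, 0 < h t.
Proof.
have [M [_ sigmaM]] := sigma_gt0; exists 0; split => // t t0.
set y := `|M| + 1.
have My : M < y by rewrite /y; have := ler_norm M; lra.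
have y0 : 0 < y by rewrite /y; have := normr_ge0 M; lra.
apply: lt_le_trans (lstar_iota_ge_min (ltW t0) y0).
by rewrite lt_min sigmaM // divr_gt0.
Qed.

Lemma sigma_dilation_of_lstar lam L C : 0 < lam -> 0 <= C -> 2 * C < L ->
  (\forall s \near +oo, h (lam * L * s) <= C * h s) ->
  \forall x \near +oo, sigma (lam * x) <= 2 * C * sigma x.
Proof.
(* At s = x sigma x both terms of sigma x + s / x agree, so h s <= 2 sigma x; the lower
   bound of h at lam L s, taken at y = lam x, then isolates sigma (lam x). *)
move=> lam0 C0 CL [T [_ hT]].
have [M [_ sigmaM]] : \forall x \near +oo, 1 <= sigma x by move/cvgryPge : sigma_cvgy; apply.
exists (Num.max (Num.max M T) 0); split; first exact: num_real.
move=> x; rewrite !gt_max => /andP[/andP[Mx Tx] x0].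
have sx1 : 1 <= sigma x by exact: sigmaM.
have sx0 : 0 < sigma x by lra.
have L0 : 0 < L by lra.
set s := x * sigma x.
have s0 : 0 < s by rewrite mulr_gt0.
have hs : h s <= 2 * sigma x.
  apply: le_trans (lstar_iota_le (ltW s0) x0) _.
  by rewrite /s [x * _]mulrC mulfK ?gt_eqF //; lra.
have hlam : h (lam * L * s) <= 2 * C * sigma x.
  apply: le_trans (hT _ _) _; first by apply: lt_le_trans Tx _; rewrite /s ler_peMr // ltW.
  by rewrite [2 * C]mulrC -mulrA ler_wpM2l.
have : Num.min (sigma (lam * x)) (L * sigma x) <= h (lam * L * s).
  have -> : L * sigma x = lam * L * s / (lam * x) by rewrite /s; field; rewrite !gt_eqF.
  apply: lstar_iota_ge_min; last by rewrite mulr_gt0.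
  by apply/ltW; rewrite !mulr_gt0.
move=> /le_trans/(_ hlam); rewrite ge_min => /orP[// | Lsx].
have : 2 * C * sigma x < L * sigma x by rewrite ltr_pM2r.
lra.
Qed.

Lemma P_prop_lstar_iota gam : 0 < gam -> P_prop sigma gam -> P_prop h (gam + 1).
Proof.
move=> gam0 /(P_prop_dilation sigma_gt0) [K [c [K1 c1 cK sigma_dil]]].
have [c0 K0] : 0 < c /\ 0 < K by split; lra.
have [n cnK] := exists_mul_expr_lt c c0 cK.
have Kn1 : 1 < K ^+ n by apply: le_lt_trans cnK; rewrite -exprS exprn_ege1.
have b1 := powR_gt1 K1 gam0; set b := K `^ gam in b1 sigma_dil.
apply: (dilation_P_prop (q := Num.max (c ^+ n.+1) (K ^+ n / b)) lstar_iota_gt0 Kn1).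
  by rewrite gt_max exprS cnK ltr_pdivrMr ?ltr_pMr ?(lt_trans ltr01) ?exprn_gt0.
have -> : (K ^+ n) `^ (gam + 1) = b ^+ n.+1 * (K ^+ n / b).
  rewrite -mulr_powRB1 ?exprn_ge0 ?ltW ?addr_gt0 // addrK powR_exprn ?ltW //.
  by rewrite exprS; field; rewrite gt_eqF // (lt_trans ltr01).
apply: lstar_iota_dilation; rewrite ?exprn_gt0 ?exprn_ge0 ?divr_gt0 ?(lt_trans ltr01) ?ltW //.
exact: near_dilation_exprn _ (ltW b1) (ltW c0) sigma_dil.
Qed.

Lemma P_prop_of_lstar_iota del : 1 < del -> P_prop h del -> P_prop sigma (del - 1).
Proof.
move=> del1 /(P_prop_dilation lstar_iota_gt0) [K [c [K1 c1 cK h_dil]]].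
have [c0 K0] : 0 < c /\ 0 < K by split; lra.
have [m cmK] := exists_mul_expr_lt 2 c0 cK.
have Km1 : 1 < K ^+ m by apply: le_lt_trans cmK; have := exprn_ege1 m c1; lra.
apply: (dilation_P_prop sigma_gt0 Km1 cmK).
apply: (sigma_dilation_of_lstar (L := K ^+ m)).
all: rewrite ?powR_gt0 ?exprn_ge0 ?exprn_gt0 ?ltW //.
rewrite [_ `^ _ * _]mulrC mulr_powRB1 ?exprn_ge0 ?ltW ?(lt_trans ltr01 del1) //.
rewrite powR_exprn ?ltW //.
exact: near_dilation_exprn _ (ltW (powR_gt1 K1 (lt_trans ltr01 del1))) (ltW c0) h_dil.
Qed.

End sigma_cvgy.

End lstar_iota.

Lemma ereal_sup_shift1 (R : realType) (S T : set R) :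
  (forall x, S x -> 0 < x) -> S !=set0 ->
  (forall x, S x -> T (x + 1)) -> (forall y, T y -> 1 < y -> S (y - 1)) ->
  (ereal_sup (EFin @` S) + 1 = ereal_sup (EFin @` T))%E.
Proof.
move=> Spos [x0 Sx0] ST TS; apply/eqP; rewrite eq_le; apply/andP; split.
  rewrite -leeBrDr //; apply: ge_ereal_sup => _ [x Sx <-].
  rewrite leeBrDr // -EFinD; apply: ereal_sup_ubound.
  by exists (x + 1) => //; exact: ST.
apply: ge_ereal_sup => _ [y Ty <-]; have [y1|y1] := leP y 1.
  have supS0 : (0 <= ereal_sup (EFin @` S))%E.
    apply: (@le_trans _ _ x0%:E); first by rewrite lee_fin; apply/ltW/Spos.
    by apply: ereal_sup_ubound; exists x0.
  by apply: le_trans (_ : 1%:E <= _)%E; rewrite ?lee_fin // leeDr.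
rewrite -leeBlDr // -EFinB; apply: ereal_sup_ubound.
by exists (y - 1) => //; exact: TS.
Qed.

Theorem corollary2p26 (R : realType) (sigma : R -> R) :
  (forall t, 0 <= t -> 0 <= sigma t) ->
  (forall s t, 0 <= s -> s <= t -> sigma s <= sigma t) ->
  sigma x @[x --> +oo] --> +oo ->
  (0 < gamma_idx sigma)%E ->
  (gamma_idx sigma + 1 = gamma_idx (lstar (iota_fn sigma)))%E.
Proof.
move=> sigma_ge0 sigma_nd sigma_cvgy.
have [[gam [gam0 Pgam]] _|none] := pselect (exists gam : R, 0 < gam /\ P_prop sigma gam);
  last by rewrite /gamma_idx asboolF // ltxx.
have Pstar := P_prop_lstar_iota sigma_ge0 sigma_nd sigma_cvgy.
have Pstar_inv := P_prop_of_lstar_iota sigma_ge0 sigma_nd sigma_cvgy.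
rewrite /gamma_idx !asboolT; last 2 first.
- by exists (gam + 1); split; [rewrite addr_gt0 | exact: Pstar].
- by exists gam.
apply: ereal_sup_shift1.
- by move=> x [].
- by exists gam.
- by move=> x [x0 Px]; split; [rewrite addr_gt0 | exact: Pstar].
- by move=> y [_ /Pstar_inv Py] y1; split; [rewrite subr_gt0 | exact: Py].
Qed.
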